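(* Let $T_*>\tau_D$ be a constant. There exist a continuous function $\mu:[0,T_*]\to(0,1]$ and a constant $\gamma_1>0$, depending only on $n,a^*,b_*,\tau_D,T_*$, with $\mu(0)=1$, $\mu$ strictly decreasing on $[0,\tau_D]$, $\mu$ strictly increasing on $[\tau_D,T_*]$ and $\mu(T_* )<1$, such that the following holds. For any trajectory of system (5) with $\|z\|_\infty<\infty$, any $t_0\ge0$, and any $i\in\mathcal V_F$, $j\in\mathcal V_L$ such that the arc $(j,i)$ belongs to $\mathcal E_{\sigma(t)}$ for all $t\in[t_0,t_0+\tau_D)$, we have $$|x_i(t)|_{\mathcal L(y(t))}\le\mu(t-t_0)\,|x(t_0)|_{\mathcal L(y(t_0))}+\gamma_1\|z\|_\infty\quad\text{for all }t\in[t_0,t_0+T_*].$$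
   Context: Standing setup. Fix integers $n\ge 2$, $k\ge 1$, $d\ge 1$. The follower set is $\mathcal V_F=\{1,\dots,n\}$ and the leader set is $\mathcal V_L=\{\hat 1,\dots,\hat k\}$ (disjoint from $\mathcal V_F$); $\mathcal V=\mathcal V_F\cup\mathcal V_L$. The interaction topology is a time-varying digraph $\mathcal G_{\sigma(t)}=(\mathcal V,\mathcal E_{\sigma(t)})$, where $\sigma:[0,\infty)\to\mathcal P$ is a piecewise constant switching signal taking values in a finite set $\mathcal P$ of digraphs on $\mathcal V$; no arc of any of these digraphs enters a leader. An arc $(j,i)$ means that $i$ receives information from $j$. Dwell-time assumption: any two consecutive switching instants of $\sigma$ are separated by at least $\tau_D>0$. For $i\in\mathcal V_F$, $N_i(\sigma(t))=\{j\in\mathcal V_F:(j,i)\in\mathcal E_{\sigma(t)}\}$ and $L_i(\sigma(t))=\{j\in\mathcal V_L:(j,i)\in\mathcal E_{\sigma(t)}\}$. System (5): $\dot y_i=u_i(y,t)$ for $i=1,\dots,k$, and $\dot x_i=\sum_{j\in N_i(\sigma(t))}a_{ij}(x,y,t)(x_j-x_i)+\sum_{j\in L_i(\sigma(t))}b_{ij}(x,y,t)(y_j-x_i)+w_i(t)$ for $i=1,\dots,n$, where $x_i,y_j\in\mathbb R^d$, $x=(x_1,\dots,x_n)$, $y=(y_1,\dots,y_k)$; each $u_i(y,t)$ is continuous in $y$ and piecewise continuous in $t$; each $w_i$ is continuous; the weights $a_{ij},b_{ij}$ are continuous and satisfy $a_*\le a_{ij}(x,y,t)\le a^*$, $b_{ij}(x,y,t)\ge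 b_*$ for all $x,y,t$, with constants $0<a_*\le a^*$, $b_*>0$. Along a trajectory, $z(t)=(u_1(y(t),t),\dots,u_k(y(t),t),w_1(t),\dots,w_n(t))\in\mathbb R^{(n+k)d}$ and $\|z\|_\infty=\sup_{t\ge0}|z(t)|$. Set notation: $|\cdot|$ is the Euclidean norm; for a closed convex $K\subset\mathbb R^d$, $|v|_K=\inf_{p\in K}|v-p|$; $\mathcal L(y(t))=\mathrm{co}\{y_1(t),\dots,y_k(t)\}$ (convex hull); $|x(t)|_{\mathcal L(y(t))}=\max_{i\in\mathcal V_F}|x_i(t)|_{\mathcal L(y(t))}$. *)

From Stdlib Require Import Reals Lra Lia List ClassicalEpsilon.
Open Scope R_scope.

(* Vectors of R^d are functions nat -> R (only coordinates l < d matter).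
   A stacked state x : nat -> nat -> R gives x i l = l-th coordinate of x_i. *)
Definition vec := nat -> R.
Definition stack := nat -> nat -> R.

Fixpoint fsum (m : nat) (f : nat -> R) : R :=
  match m with O => 0 | S m' => fsum m' f + f m' end.

(* fmax m f = max (0, f 0, ..., f (m-1)) ; used for nonnegative f *)
Fixpoint fmax (m : nat) (f : nat -> R) : R :=
  match m with O => 0 | S m' => Rmax (fmax m' f) (f m') end.

Definition enorm (d : nat) (v : vec) : R := sqrt (fsum d (fun l => v l ^ 2)).

Definition is_glb (S : R -> Prop) (r : R) : Prop :=
  (forall s, S s -> r <= s) /\ (forall m, (forall s, S s -> m <= s) -> m <= r).
Definition Rinf (S : R -> Prop) : R :=
  epsilon (inhabits 0) (fun r => is_glb S r).

Definition in_hull (k d : nat) (Y : stack) (p : vec) : Prop :=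
  exists lam : nat -> R,
    (forall j, (j < k)%nat -> 0 <= lam j) /\ fsum k lam = 1 /\
    (forall l, (l < d)%nat -> p l = fsum k (fun j => lam j * Y j l)).

Definition dist_hull (k d : nat) (Y : stack) (v : vec) : R :=
  Rinf (fun r => exists p, in_hull k d Y p /\ r = enorm d (fun l => v l - p l)).

(* |x|_{L(y)} = max_i |x_i|_{L(y)} *)
Definition dist_state (n k d : nat) (Y X : stack) : R :=
  fmax n (fun i => dist_hull k d Y (X i)).

Definition loc_finite (E : R -> Prop) : Prop :=
  forall T, exists l : list R, forall t, E t -> 0 <= t -> t <= T -> In t l.

Definition cont_nonneg (f : R -> R) : Prop :=
  forall t, 0 <= t -> forall eps, eps > 0 -> exists delta, delta > 0 /\
    forall s, 0 <= s -> Rabs (s - t) < delta -> Rabs (f s - f t) < eps.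

Definition close (m d : nat) (delta : R) (X X' : stack) : Prop :=
  forall i l, (i < m)%nat -> (l < d)%nat -> Rabs (X' i l - X i l) < delta.

Definition cont_weight (n k d : nat) (f : stack -> stack -> R -> R) : Prop :=
  forall x y t, 0 <= t -> forall eps, eps > 0 -> exists delta, delta > 0 /\
    forall x' y' t', 0 <= t' -> close n d delta x x' -> close k d delta y y' ->
      Rabs (t' - t) < delta -> Rabs (f x' y' t' - f x y t) < eps.

(* Dwell-time switching signal with values in P = {0,...,Np-1}:
   switching instants (a superset of the actual ones) s_0 = 0 < s_1 < ...
   with s_(m+1) - s_m >= tauD and sigma constant on each [s_m, s_(m+1)). *)
Definition dwell_signal (Np : nat) (tauD : R) (sigma : R -> nat) : Prop :=
  (forall t, 0 <= t -> (sigma t < Np)%nat) /\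
  exists s : nat -> R, s O = 0 /\
    (forall m, s (S m) - s m >= tauD) /\
    (forall m t, s m <= t -> t < s (S m) -> sigma t = sigma (s m)).

(* Graph p is encoded by  Eff p j i  (arc from follower j to follower i)
   and  Elf p j i  (arc from leader j to follower i); no arc enters a leader. *)
Definition follower_rhs (n k : nat)
  (Eff Elf : nat -> nat -> nat -> bool) (sigma : R -> nat)
  (a b : nat -> nat -> stack -> stack -> R -> R)
  (w : nat -> R -> vec) (x y : stack) (t : R) (i l : nat) : R :=
  fsum n (fun j => if Eff (sigma t) j i then a i j x y t * (x j l - x i l) else 0)
  + fsum k (fun j => if Elf (sigma t) j i then b i j x y t * (y j l - x i l) else 0)
  + w i t l.

(* |z(t)| with z(t) = (u_1(y(t),t),...,u_k(y(t),t), w_1(t),...,w_n(t)) *)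
Definition znorm (n k d : nat) (u : nat -> stack -> R -> vec) (w : nat -> R -> vec)
  (y : R -> stack) (t : R) : R :=
  sqrt (fsum k (fun j => fsum d (fun l => u j (y t) t l ^ 2))
        + fsum n (fun i => fsum d (fun l => w i t l ^ 2))).

(* The distance of a point [v] to the hull co{Y_j} is the supremum,
   over directions [e] with [|e| <= 1], of [e.v - h(e)], where [h(e) = max_j e.Y_j]
   is the support function of the hull (duality, approximated to any [delta]).
   So it suffices to bound, for a fixed direction [e], the "excess"
   [q_m(t) = e.x_m(t) - envelope(t)] of each follower over an affine upper
   envelope of the leaders' projections, whose slope [Z + eps] dominates their
   speed.  Three comparison arguments on the window [t0, t0 + T*] give
     1. [q_m < D0 + eps] for every follower, where [D0 = |x(t0)|_{L(y(t0))}],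
     2. [q_i] decreases linearly at rate [c D0] while the arc (j, i) is present,
     3. afterwards it recovers at most exponentially, at the coupling gain [A],
   which is exactly the profile [mu].  Each comparison is an instance of a
   barrier principle for functions differentiable off a locally finite set. *)

From Stdlib Require Import Reals Lra Lia List ClassicalEpsilon Classical.
Open Scope R_scope.

Lemma fsum_ext m f g : (forall l, (l < m)%nat -> f l = g l) -> fsum m f = fsum m g.
Proof.
  induction m as [|m IH]; simpl; intros H; auto.
  rewrite IH by (intros; apply H; lia). now rewrite (H m) by lia.
Qed.

Lemma fsum_zero m : fsum m (fun _ => 0) = 0.
Proof. induction m as [|m IH]; simpl; lra. Qed.

Lemma fsum_plus m f g : fsum m (fun l => f l + g l) = fsum m f + fsum m g.
Proof. induction m as [|m IH]; simpl; lra. Qed.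

Lemma fsum_scal m c f : fsum m (fun l => c * f l) = c * fsum m f.
Proof. induction m as [|m IH]; simpl; [|rewrite IH]; lra. Qed.

Lemma fsum_minus m f g : fsum m (fun l => f l - g l) = fsum m f - fsum m g.
Proof. induction m as [|m IH]; simpl; lra. Qed.

Lemma fsum_le m f g : (forall l, (l < m)%nat -> f l <= g l) -> fsum m f <= fsum m g.
Proof.
  induction m as [|m IH]; simpl; intros H; [lra|].
  assert (f m <= g m) by (apply H; lia).
  assert (fsum m f <= fsum m g) by (apply IH; intros; apply H; lia). lra.
Qed.

Lemma fsum_nonneg m f : (forall l, (l < m)%nat -> 0 <= f l) -> 0 <= fsum m f.
Proof. intros H. rewrite <- (fsum_zero m). now apply fsum_le. Qed.

Lemma fsum_const_le m f c : (forall l, (l < m)%nat -> f l <= c) -> fsum m f <= INR m * c.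
Proof.
  induction m as [|m IH]; intros H; simpl fsum; [simpl; lra|].
  assert (f m <= c) by (apply H; lia).
  assert (fsum m f <= INR m * c) by (apply IH; intros; apply H; lia).
  rewrite S_INR. lra.
Qed.

Lemma fsum_elem_le m f j :
  (forall l, (l < m)%nat -> 0 <= f l) -> (j < m)%nat -> f j <= fsum m f.
Proof.
  induction m as [|m IH]; simpl; intros H Hj; [lia|].
  assert (0 <= fsum m f) by (apply fsum_nonneg; intros; apply H; lia).
  destruct (Nat.eq_dec j m) as [->|Hne]; [lra|].
  assert (f j <= fsum m f) by (apply IH; [intros; apply H|]; lia).
  assert (0 <= f m) by (apply H; lia). lra.
Qed.

Lemma fsum_nonpos_elem m f j :
  (forall l, (l < m)%nat -> f l <= 0) -> (j < m)%nat -> fsum m f <= f j.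
Proof.
  intros H Hj.
  assert (-1 * f j <= fsum m (fun l => -1 * f l)).
  { apply (fsum_elem_le m (fun l => -1 * f l)); auto.
    intros l Hl; specialize (H l Hl); lra. }
  rewrite fsum_scal in H0. lra.
Qed.

Lemma fsum_swap m p (F : nat -> nat -> R) :
  fsum m (fun a => fsum p (fun b => F a b)) = fsum p (fun b => fsum m (fun a => F a b)).
Proof.
  induction m as [|m IH]; simpl; [now rewrite fsum_zero|].
  now rewrite IH, <- fsum_plus.
Qed.

Lemma fsum_delta m j c : (j < m)%nat ->
  fsum m (fun l => if Nat.eq_dec l j then c else 0) = c.
Proof.
  induction m as [|m IH]; simpl; intros H; [lia|].
  destruct (Nat.eq_dec m j) as [->|Hne].
  - rewrite (fsum_ext j _ (fun _ => 0)), fsum_zero; [lra|].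
    intros l Hl; destruct (Nat.eq_dec l j); [lia|auto].
  - rewrite IH by lia. lra.
Qed.

Lemma Rabs_fsum m f : Rabs (fsum m f) <= fsum m (fun l => Rabs (f l)).
Proof.
  induction m as [|m IH]; simpl; [rewrite Rabs_R0; lra|].
  eapply Rle_trans; [apply Rabs_triang|lra].
Qed.

(** Maxima.  [maxs m f] is the maximum of [f 0, ..., f m] (m+1 values). *)

Fixpoint maxs (m : nat) (f : nat -> R) : R :=
  match m with O => f O | S m' => Rmax (maxs m' f) (f m) end.

Lemma maxs_ge m f j : (j <= m)%nat -> f j <= maxs m f.
Proof.
  induction m as [|m IH]; simpl; intros H.
  - replace j with O by lia. lra.
  - destruct (Nat.eq_dec j (S m)) as [->|Hne]; [apply Rmax_r|].
    eapply Rle_trans; [apply IH; lia|apply Rmax_l].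
Qed.

Lemma maxs_attained m f : exists j, (j <= m)%nat /\ maxs m f = f j.
Proof.
  induction m as [|m [j [Hj E]]]; simpl; [now exists O|].
  destruct (Rle_dec (maxs m f) (f (S m))).
  - exists (S m). split; [lia|]. now rewrite Rmax_right.
  - exists j. split; [lia|]. rewrite Rmax_left; lra.
Qed.

Lemma fmax_ge m f j : (j < m)%nat -> f j <= fmax m f.
Proof.
  induction m as [|m IH]; simpl; intros H; [lia|].
  destruct (Nat.eq_dec j m) as [->|Hne]; [apply Rmax_r|].
  eapply Rle_trans; [apply IH; lia|apply Rmax_l].
Qed.

Lemma fmax_nonneg m f : 0 <= fmax m f.
Proof. induction m as [|m IH]; simpl; [lra|]. eapply Rle_trans; [apply IH|apply Rmax_l]. Qed.

Definition contI (al T : R) (f : R -> R) : Prop :=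
  forall t, al <= t <= T -> forall eps, eps > 0 -> exists delta, delta > 0 /\
    forall s, al <= s <= T -> Rabs (s - t) < delta -> Rabs (f s - f t) < eps.

Lemma contI_ext al T f g :
  (forall t, al <= t <= T -> f t = g t) -> contI al T f -> contI al T g.
Proof.
  intros E Hf t Ht eps He. destruct (Hf t Ht eps He) as [dl [Hdl H]].
  exists dl; split; auto. intros s Hs Hds. rewrite <- !E by auto. auto.
Qed.

Lemma contI_const al T c : contI al T (fun _ => c).
Proof.
  intros t Ht eps He. exists 1; split; [lra|].
  intros. rewrite Rminus_diag, Rabs_R0; lra.
Qed.

Lemma contI_plus al T f g :
  contI al T f -> contI al T g -> contI al T (fun t => f t + g t).
Proof.
  intros Hf Hg t Ht eps He.
  destruct (Hf t Ht (eps/2)) as [d1 [Hd1 H1]]; [lra|].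
  destruct (Hg t Ht (eps/2)) as [d2 [Hd2 H2]]; [lra|].
  exists (Rmin d1 d2); split; [now apply Rmin_pos|].
  intros s Hs Hd.
  pose proof (H1 s Hs (Rlt_le_trans _ _ _ Hd (Rmin_l _ _))).
  pose proof (H2 s Hs (Rlt_le_trans _ _ _ Hd (Rmin_r _ _))).
  replace (f s + g s - (f t + g t)) with ((f s - f t) + (g s - g t)) by ring.
  eapply Rle_lt_trans; [apply Rabs_triang|lra].
Qed.

Lemma contI_scal al T c f : contI al T f -> contI al T (fun t => c * f t).
Proof.
  intros Hf t Ht eps He.
  assert (Hc : 0 < Rabs c + 1) by (pose proof (Rabs_pos c); lra).
  destruct (Hf t Ht (eps / (Rabs c + 1))) as [dl [Hdl H]];
    [now apply Rdiv_lt_0_compat|].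
  exists dl; split; auto. intros s Hs Hds. specialize (H s Hs Hds).
  replace (c * f s - c * f t) with (c * (f s - f t)) by ring. rewrite Rabs_mult.
  apply (Rmult_lt_compat_r (Rabs c + 1)) in H; [|lra].
  unfold Rdiv in H. rewrite Rmult_assoc, Rinv_l in H by lra.
  pose proof (Rabs_pos (f s - f t)). nra.
Qed.

Lemma contI_minus al T f g :
  contI al T f -> contI al T g -> contI al T (fun t => f t - g t).
Proof.
  intros Hf Hg. apply (contI_ext al T (fun t => f t + (-1) * g t)); [intros; ring|].
  apply contI_plus; auto. now apply contI_scal.
Qed.

Lemma contI_fsum al T m (F : nat -> R -> R) :
  (forall l, (l < m)%nat -> contI al T (F l)) ->
  contI al T (fun t => fsum m (fun l => F l t)).
Proof.
  induction m as [|m IH]; simpl; intros H; [apply contI_const|].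
  apply (contI_plus al T (fun t => fsum m (fun l => F l t)) (F m)).
  - apply IH; intros; apply H; lia.
  - apply H; lia.
Qed.

Lemma Rmax_lipschitz a b a' b' :
  Rabs (Rmax a b - Rmax a' b') <= Rmax (Rabs (a - a')) (Rabs (b - b')).
Proof.
  pose proof (Rmax_l (Rabs (a - a')) (Rabs (b - b'))).
  pose proof (Rmax_r (Rabs (a - a')) (Rabs (b - b'))).
  revert H H0. generalize (Rmax (Rabs (a - a')) (Rabs (b - b'))). intros M H1 H2.
  pose proof (Rle_abs (a - a')). pose proof (Rle_abs (b - b')).
  pose proof (Rle_abs (- (a - a'))). pose proof (Rle_abs (- (b - b'))).
  rewrite Rabs_Ropp in *. apply Rabs_le. unfold Rmax; repeat destruct Rle_dec; lra.
Qed.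

Lemma contI_max al T f g :
  contI al T f -> contI al T g -> contI al T (fun t => Rmax (f t) (g t)).
Proof.
  intros Hf Hg t Ht eps He.
  destruct (Hf t Ht eps He) as [d1 [Hd1 H1]]. destruct (Hg t Ht eps He) as [d2 [Hd2 H2]].
  exists (Rmin d1 d2); split; [now apply Rmin_pos|].
  intros s Hs Hd. eapply Rle_lt_trans; [apply Rmax_lipschitz|].
  apply Rmax_lub_lt; [apply H1|apply H2]; auto;
    eapply Rlt_le_trans; eauto; [apply Rmin_l|apply Rmin_r].
Qed.

Lemma contI_maxs al T m (F : nat -> R -> R) :
  (forall l, (l <= m)%nat -> contI al T (F l)) ->
  contI al T (fun t => maxs m (fun l => F l t)).
Proof.
  induction m as [|m IH]; simpl; intros H; [apply H; lia|].
  apply (contI_max al T (fun t => maxs m (fun l => F l t)) (F (S m))).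
  - apply IH; intros; apply H; lia.
  - apply H; lia.
Qed.

Lemma contI_of_nonneg al T f : 0 <= al -> cont_nonneg f -> contI al T f.
Proof.
  intros H0 Hf t Ht eps He. destruct (Hf t ltac:(lra) eps He) as [dl [Hdl H]].
  exists dl; split; auto. intros s Hs Hds. apply H; auto; lra.
Qed.

Lemma contI_of_deriv al T f f' :
  (forall t, derivable_pt_lim f t (f' t)) -> contI al T f.
Proof.
  intros Hd t Ht eps He.
  assert (C : continuity_pt f t)
    by (apply derivable_continuous_pt; exists (f' t); apply Hd).
  destruct (C eps He) as [dl [Hdl H]]. exists dl; split; auto.
  intros s Hs Hds. destruct (Req_dec t s) as [<-|Hne].
  - rewrite Rminus_diag, Rabs_R0; lra.
  - apply (H s). split; [split; [constructor|auto]|apply Hds].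
Qed.

Lemma first_exit al T g :
  contI al T g -> 0 < g al -> (exists t, al <= t <= T /\ g t <= 0) ->
  exists ts, al < ts <= T /\ g ts <= 0 /\ forall s, al <= s < ts -> 0 < g s.
Proof.
  intros Hc H0 [t [Ht Hgt]].
  set (S := fun s => al <= s <= T /\ forall r, al <= r <= s -> 0 < g r).
  assert (Sal : S al) by (split; [lra|]; intros r Hr; now replace r with al by lra).
  destruct (completeness S) as [ts [Hub Hlub]];
    [exists T; intros s [Hs _]; lra|now exists al|].
  assert (Hts : al <= ts <= T) by (split; [now apply Hub|apply Hlub; intros s [Hs _]; lra]).
  assert (Below : forall s, al <= s < ts -> 0 < g s).
  { intros s Hs. apply NNPP. intros Hgs.
    assert (ts <= s); [|lra]. apply Hlub. intros r [Hr Hpos].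
    destruct (Rle_lt_dec r s); auto. exfalso. apply Hgs, Hpos. lra. }
  assert (Hgts : g ts <= 0).
  { apply Rnot_lt_le. intros Hpos.
    destruct (Hc ts Hts (g ts) Hpos) as [dl [Hdl Near]].
    assert (Pos : forall s, al <= s <= T -> Rabs (s - ts) < dl -> 0 < g s).
    { intros s Hs Hds. specialize (Near s Hs Hds). apply Rabs_def2 in Near. lra. }
    destruct (Rlt_le_dec ts T) as [Hlt|Hge].
    - set (s' := Rmin (ts + dl/2) T).
      assert (ts < s' <= ts + dl/2) by (split; [apply Rmin_glb_lt|apply Rmin_l]; lra).
      assert (s' <= T) by apply Rmin_r.
      assert (S s').
      { split; [lra|].
        intros r Hr. destruct (Rlt_le_dec r ts); [apply Below; lra|].
        apply Pos; [lra|rewrite Rabs_right; lra]. }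
      assert (s' <= ts) by now apply Hub. lra.
    - destruct (Rlt_le_dec t ts); [pose proof (Below t ltac:(lra)); lra|].
      replace t with ts in Hgt by lra. lra. }
  exists ts. split; [|auto]. split; [|lra].
  destruct (Req_dec ts al) as [E|]; [rewrite E in Hgts; lra|lra].
Qed.

Lemma no_increasing_exit al T ts g g' s0 :
  al < ts <= T -> contI al T g -> g ts <= 0 -> (forall s, al <= s < ts -> 0 < g s) ->
  s0 < ts -> (forall s, s0 < s < ts -> derivable_pt_lim g s (g' s) /\ 0 < g' s) -> False.
Proof.
  intros Hts Hc Hg Hpos Hs0 Hd.
  set (s1 := (Rmax s0 al + ts) / 2).
  assert (Rmax s0 al < ts) by (apply Rmax_lub_lt; lra).
  pose proof (Rmax_l s0 al). pose proof (Rmax_r s0 al).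
  assert (Hs1 : Rmax s0 al < s1 < ts) by (unfold s1; lra).
  assert (Hg1 : 0 < g s1) by (apply Hpos; lra).
  destruct (Hc ts ltac:(lra) (g s1 - g ts) ltac:(lra)) as [dl [Hdl Near]].
  pose proof (Rmax_l (ts - dl/2) ((s1 + ts)/2)). pose proof (Rmax_r (ts - dl/2) ((s1 + ts)/2)).
  assert (Rmax (ts - dl/2) ((s1 + ts)/2) < ts) by (apply Rmax_lub_lt; lra).
  set (s2 := Rmax (ts - dl/2) ((s1 + ts)/2)) in *.
  assert (Hg2 : g s2 < g s1).
  { assert (Q : Rabs (g s2 - g ts) < g s1 - g ts) by (apply Near; [lra|rewrite Rabs_left; lra]).
    apply Rabs_def2 in Q. lra. }
  destruct (MVT_cor2 g g' s1 s2) as [c [Ec Hc']]; [lra|intros c Hc'; apply Hd; lra|].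
  assert (0 < g' c) by (apply Hd; lra).
  assert (0 < g' c * (s2 - s1)) by (apply Rmult_lt_0_compat; lra). lra.
Qed.

Lemma list_gap (l : list R) ts : exists s, s < ts /\ forall r, In r l -> r < ts -> r <= s.
Proof.
  induction l as [|a l [s [Hs H]]]; [exists (ts - 1); split; [lra|]; intros r []|].
  destruct (Rlt_le_dec a ts) as [Hlt|Hge].
  - exists (Rmax s a). split; [now apply Rmax_lub_lt|].
    intros r [<-|Hr] Hrt; [apply Rmax_r|eapply Rle_trans; [apply H; auto|apply Rmax_l]].
  - exists s. split; auto. intros r [<-|Hr] Hrt; [lra|auto].
Qed.

Lemma loc_finite_gap (E : R -> Prop) : loc_finite E -> forall ts, exists s, s < ts /\
  forall r, s < r < ts -> 0 <= r -> ~ E r.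
Proof.
  intros HE ts. destruct (HE ts) as [l Hl]. destruct (list_gap l ts) as [s [Hs H]].
  exists s. split; auto.
  intros r Hr H0 Er. specialize (H r (Hl r Er H0 ltac:(lra)) ltac:(lra)). lra.
Qed.

(* First exit for a finite family [g 0, ..., g (N-1)], through its minimum. *)
Lemma first_exit_family (N : nat) (g : nat -> R -> R) al T m t :
  (forall l, (l < N)%nat -> contI al T (g l)) -> (forall l, (l < N)%nat -> 0 < g l al) ->
  (m < N)%nat -> al <= t <= T -> g m t <= 0 ->
  exists ts l, al < ts <= T /\ (l < N)%nat /\ g l ts <= 0 /\
    forall s l', al <= s < ts -> (l' < N)%nat -> 0 < g l' s.
Proof.
  intros Hc H0 Hm Ht Hgt.
  set (gmin := fun s => - maxs (N - 1) (fun l => - g l s)).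
  assert (Hmin : forall s l, (l < N)%nat -> gmin s <= g l s).
  { intros s l Hl. unfold gmin. pose proof (maxs_ge (N - 1) (fun l => - g l s) l ltac:(lia)). lra. }
  destruct (first_exit al T gmin) as [ts [Hts [Hgts Hbefore]]].
  - apply contI_ext with (fun s => -1 * maxs (N - 1) (fun l => - g l s));
      [intros; unfold gmin; ring|].
    apply contI_scal, contI_maxs. intros l Hl.
    apply contI_ext with (fun s => -1 * g l s); [intros; ring|]. apply contI_scal, Hc. lia.
  - unfold gmin. destruct (maxs_attained (N - 1) (fun l => - g l al)) as [l [Hl ->]].
    pose proof (H0 l ltac:(lia)). lra.
  - exists t. split; auto. pose proof (Hmin t m Hm). lra.
  - destruct (maxs_attained (N - 1) (fun l => - g l ts)) as [l [Hl El]].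
    exists ts, l. split; [auto|split; [lia|split]].
    + unfold gmin in Hgts. rewrite El in Hgts. lra.
    + intros s l' Hs Hl'. pose proof (Hbefore s Hs). pose proof (Hmin s l' Hl'). lra.
Qed.

Lemma barrier_principle (N : nat) (g g' : nat -> R -> R) (E : R -> Prop) al T tol :
  0 <= al -> loc_finite E -> tol > 0 ->
  (forall m, (m < N)%nat -> contI al T (g m)) ->
  (forall m s, (m < N)%nat -> al < s < T -> ~ E s -> derivable_pt_lim (g m) s (g' m s)) ->
  (forall m, (m < N)%nat -> 0 < g m al) ->
  (forall m s, (m < N)%nat -> al < s < T -> ~ E s ->
     (forall m', (m' < N)%nat -> 0 < g m' s) -> g m s < tol -> 0 < g' m s) ->
  forall m t, (m < N)%nat -> al <= t <= T -> 0 < g m t.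
Proof.
  intros Hal HE Htol Hc Hd H0 Hstep m t Hm Ht.
  apply Rnot_le_lt. intros Hgt.
  destruct (first_exit_family N g al T m t Hc H0 Hm Ht Hgt)
    as [ts [l [Hts [Hl [Hgl Allpos]]]]].
  (* Just before [ts], [g l] is within [tol] of zero and [E] is avoided. *)
  destruct (Hc l Hl ts ltac:(lra) tol Htol) as [dl [Hdl Near]].
  destruct (loc_finite_gap E HE ts) as [s0 [Hs0 Gap]].
  pose proof (Rmax_l (Rmax s0 al) (ts - dl)). pose proof (Rmax_r (Rmax s0 al) (ts - dl)).
  pose proof (Rmax_l s0 al). pose proof (Rmax_r s0 al).
  set (s1 := Rmax (Rmax s0 al) (ts - dl)) in *.
  apply (no_increasing_exit al T ts (g l) (g' l) s1); auto.
  - apply Rmax_lub_lt; [apply Rmax_lub_lt|]; lra.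
  - intros s Hs. assert (NE : ~ E s) by (apply Gap; lra).
    split; [apply Hd; auto; lra|].
    apply Hstep; auto; [lra|intros; apply Allpos; auto; lra|].
    assert (Q : Rabs (g l s - g l ts) < tol) by (apply Near; [lra|rewrite Rabs_left; lra]).
    apply Rabs_def2 in Q. lra.
Qed.

Lemma deriv_affine c0 c s0 x : derivable_pt_lim (fun t => c0 + c * (t - s0)) x c.
Proof.
  pose proof (derivable_pt_lim_plus _ _ x _ _ (derivable_pt_lim_const c0 x)
    (derivable_pt_lim_scal (fun t => t - s0) c x _
      (derivable_pt_lim_minus _ _ x _ _ (derivable_pt_lim_id x) (derivable_pt_lim_const s0 x))))
    as H.
  replace (0 + c * (1 - 0)) with c in H by ring. exact H.
Qed.

Lemma slope_bound (F F' : R -> R) (E : R -> Prop) al T c eps :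
  0 <= al -> loc_finite E -> eps > 0 -> contI al T F ->
  (forall s, al < s < T -> ~ E s -> derivable_pt_lim F s (F' s) /\ F' s <= c) ->
  forall t, al <= t <= T -> F t < F al + (c + eps) * (t - al) + eps.
Proof.
  intros Hal HE Heps Hc Hd t Ht.
  set (B := fun s => (F al + eps) + (c + eps) * (s - al)).
  assert (HB : forall s, derivable_pt_lim B s (c + eps)) by (intros; apply deriv_affine).
  assert (0 < B t - F t); [|unfold B in *; lra].
  apply (barrier_principle 1 (fun _ s => B s - F s) (fun _ s => c + eps - F' s) E al T eps
           Hal HE Heps) with (m := O); auto; try lia.
  - intros. apply contI_minus; auto. now apply (contI_of_deriv _ _ _ (fun _ => c + eps)).
  - intros _ s _ Hs NE. apply derivable_pt_lim_minus; [apply HB|now apply Hd].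
  - intros. unfold B. lra.
  - intros _ s _ Hs NE _ _. destruct (Hd s Hs NE). lra.
Qed.

(** For a direction [e] with [|e| <= 1], [e.v - h_Y(e)] is a lower bound for
    [|v|_{co Y}], where [h_Y(e) = max_j e.Y_j] is the support function of the
    hull; and the bound is attained up to any [delta > 0]. *)

Definition dot (d : nat) (e v : vec) : R := fsum d (fun l => e l * v l).
Definition sqnorm (d : nat) (v : vec) : R := fsum d (fun l => v l ^ 2).
Definition support (k d : nat) (e : vec) (Y : stack) : R :=
  maxs (k - 1) (fun j => dot d e (Y j)).

Lemma dot_minus d e v p : dot d e (fun l => v l - p l) = dot d e v - dot d e p.
Proof. unfold dot. rewrite <- fsum_minus. apply fsum_ext; intros; ring. Qed.

Lemma dot_opp d e v : dot d (fun l => - e l) v = - dot d e v.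
Proof.
  unfold dot. replace (- fsum d (fun l => e l * v l)) with (-1 * fsum d (fun l => e l * v l))
    by ring.
  rewrite <- fsum_scal. apply fsum_ext; intros; ring.
Qed.

Lemma sqnorm_nonneg d v : 0 <= sqnorm d v.
Proof. apply fsum_nonneg. intros. apply pow2_ge_0. Qed.

Lemma sqnorm_opp d e : sqnorm d (fun l => - e l) = sqnorm d e.
Proof. unfold sqnorm. apply fsum_ext; intros; ring. Qed.

Lemma sqr_enorm d v : enorm d v * enorm d v = sqnorm d v.
Proof. apply sqrt_sqrt, sqnorm_nonneg. Qed.

Lemma dot_le_enorm d e v : sqnorm d e <= 1 -> dot d e v <= enorm d v.
Proof.
  intros He.
  assert (K : forall lam, lam > 0 -> 2 * lam * dot d e v <= lam ^ 2 + sqnorm d v).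
  { intros lam Hl.
    assert (0 <= fsum d (fun l => (lam * e l - v l) ^ 2))
      by (apply fsum_nonneg; intros; apply pow2_ge_0).
    rewrite (fsum_ext d _ (fun l => lam ^ 2 * e l ^ 2 + (-2 * lam * (e l * v l) + v l ^ 2)))
      in H by (intros; ring).
    rewrite !fsum_plus, !fsum_scal in H. fold (sqnorm d e) (dot d e v) (sqnorm d v) in H.
    assert (lam ^ 2 * sqnorm d e <= lam ^ 2) by (assert (0 < lam ^ 2) by (apply pow_lt; auto); nra).
    lra. }
  pose proof (sqr_enorm d v). assert (0 <= enorm d v) by apply sqrt_pos.
  destruct (Rlt_le_dec 0 (enorm d v)) as [Hpos|Hz].
  - specialize (K (enorm d v) Hpos). simpl in K.
    apply (Rmult_le_reg_l (2 * enorm d v)); nra.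
  - destruct (Rle_lt_dec (dot d e v) 0); [lra|].
    specialize (K (dot d e v) ltac:(lra)). simpl in K. nra.
Qed.

Lemma Rinf_glb (S : R -> Prop) :
  (exists s, S s) -> (forall s, S s -> 0 <= s) -> is_glb S (Rinf S).
Proof.
  intros [s0 Hs0] Hlb. apply (epsilon_spec (inhabits 0) (fun r => is_glb S r)).
  destruct (completeness (fun r => S (- r))) as [m [Hub Hl]].
  - exists 0. intros r Hr. specialize (Hlb _ Hr). lra.
  - exists (- s0). now rewrite Ropp_involutive.
  - exists (- m). split.
    + intros s Hs. assert (- s <= m) by (apply Hub; now rewrite Ropp_involutive). lra.
    + intros b Hb. assert (m <= - b); [|lra].
      apply Hl. intros r Hr. specialize (Hb _ Hr). lra.
Qed.

Lemma in_hull_vertex k d Y j : (j < k)%nat -> in_hull k d Y (Y j).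
Proof.
  intros Hj. exists (fun m => if Nat.eq_dec m j then 1 else 0).
  split; [|split; [now apply fsum_delta|]].
  - intros m _. destruct (Nat.eq_dec m j); lra.
  - intros l _. rewrite (fsum_ext k _ (fun m => if Nat.eq_dec m j then Y j l else 0)).
    + now rewrite fsum_delta.
    + intros m _. destruct (Nat.eq_dec m j) as [->|]; ring.
Qed.

Lemma in_hull_towards_vertex k d Y p j s :
  in_hull k d Y p -> (j < k)%nat -> 0 <= s <= 1 ->
  in_hull k d Y (fun l => p l + s * (Y j l - p l)).
Proof.
  intros [lam [Hl1 [Hl2 Hl3]]] Hj Hs.
  exists (fun m => (1 - s) * lam m + s * (if Nat.eq_dec m j then 1 else 0)).
  split; [|split].
  - intros m Hm. specialize (Hl1 m Hm). destruct (Nat.eq_dec m j); nra.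
  - rewrite fsum_plus, !fsum_scal, fsum_delta, Hl2 by auto. ring.
  - intros l Hl.
    rewrite (fsum_ext k _ (fun m => (1 - s) * (lam m * Y m l)
                                   + s * (if Nat.eq_dec m j then Y j l else 0))).
    + rewrite fsum_plus, !fsum_scal, fsum_delta, <- Hl3 by auto. ring.
    + intros m _. destruct (Nat.eq_dec m j) as [->|]; ring.
Qed.

Lemma dist_hull_glb k d Y v : (1 <= k)%nat ->
  is_glb (fun r => exists p, in_hull k d Y p /\ r = enorm d (fun l => v l - p l))
         (dist_hull k d Y v).
Proof.
  intros Hk. apply Rinf_glb.
  - exists (enorm d (fun l => v l - Y O l)), (Y O). split; auto. apply in_hull_vertex; lia.
  - intros s [p [_ ->]]. apply sqrt_pos.
Qed.

Lemma dist_hull_nonneg k d Y v : (1 <= k)%nat -> 0 <= dist_hull k d Y v.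
Proof. intros Hk. apply (dist_hull_glb k d Y v Hk). intros s [p [_ ->]]. apply sqrt_pos. Qed.

Lemma dist_hull_le k d Y v p : (1 <= k)%nat -> in_hull k d Y p ->
  dist_hull k d Y v <= enorm d (fun l => v l - p l).
Proof. intros Hk Hp. apply (dist_hull_glb k d Y v Hk). now exists p. Qed.

Lemma dist_hull_approx k d Y v eta : (1 <= k)%nat -> eta > 0 ->
  exists p, in_hull k d Y p /\
    sqnorm d (fun l => v l - p l) < dist_hull k d Y v ^ 2 + eta.
Proof.
  intros Hk Heta. set (D := dist_hull k d Y v).
  assert (HD : 0 <= D) by now apply dist_hull_nonneg.
  set (e1 := Rmin 1 (eta / (2 * D + 1))).
  assert (He1 : 0 < e1 <= 1)
    by (split; [apply Rmin_pos; [lra|apply Rdiv_lt_0_compat; lra]|apply Rmin_l]).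
  assert (He1D : e1 * (2 * D + 1) <= eta).
  { pose proof (Rmin_r 1 (eta / (2 * D + 1))). fold e1 in H.
    apply (Rmult_le_compat_r (2 * D + 1)) in H; [|lra].
    unfold Rdiv in H. rewrite Rmult_assoc, Rinv_l in H; lra. }
  destruct (dist_hull_glb k d Y v Hk) as [_ Hgreat].
  destruct (classic (exists p, in_hull k d Y p /\ enorm d (fun l => v l - p l) < D + e1))
    as [[p [Hp Hr]]|Hno].
  - exists p. split; auto. rewrite <- sqr_enorm.
    assert (0 <= enorm d (fun l => v l - p l)) by apply sqrt_pos.
    assert (enorm d (fun l => v l - p l) * enorm d (fun l => v l - p l) < (D + e1) * (D + e1))
      by (apply Rmult_le_0_lt_compat; lra).
    fold D. simpl. nra.
  - assert (D + e1 <= D); [|lra]. apply Hgreat. intros s [p [Hp ->]].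
    apply Rnot_lt_le. intros Hlt. apply Hno. now exists p.
Qed.

Lemma dot_le_support k d e Y p : (1 <= k)%nat -> in_hull k d Y p ->
  dot d e p <= support k d e Y.
Proof.
  intros Hk [lam [Hl1 [Hl2 Hl3]]]. unfold dot.
  rewrite (fsum_ext d _ (fun l => fsum k (fun j => e l * (lam j * Y j l))))
    by (intros l Hl; rewrite Hl3 by auto; now rewrite <- fsum_scal).
  rewrite fsum_swap.
  rewrite (fsum_ext k _ (fun j => lam j * dot d e (Y j)))
    by (intros; unfold dot; rewrite <- fsum_scal; apply fsum_ext; intros; ring).
  apply Rle_trans with (fsum k (fun j => support k d e Y * lam j)).
  - apply fsum_le. intros j Hj. rewrite Rmult_comm. apply Rmult_le_compat_r; auto.
    unfold support. apply (maxs_ge (k - 1) (fun j => dot d e (Y j))). lia.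
  - rewrite fsum_scal, Hl2. lra.
Qed.

Lemma support_lower_bound k d e Y v : (1 <= k)%nat -> sqnorm d e <= 1 ->
  dot d e v - support k d e Y <= dist_hull k d Y v.
Proof.
  intros Hk He. apply (dist_hull_glb k d Y v Hk). intros s [p [Hp ->]].
  pose proof (dot_le_support k d e Y p Hk Hp).
  pose proof (dot_le_enorm d e (fun l => v l - p l) He). rewrite dot_minus in H0. lra.
Qed.

(* A bound on the squared distance between a vertex and any hull point. *)
Definition hull_spread (k d : nat) (Y : stack) : R :=
  fsum d (fun l => (2 * fsum k (fun m => Rabs (Y m l))) ^ 2).

Lemma hull_spread_bound k d Y p j : in_hull k d Y p -> (j < k)%nat ->
  sqnorm d (fun l => Y j l - p l) <= hull_spread k d Y.
Proof.
  intros [lam [Hl1 [Hl2 Hl3]]] Hj. apply fsum_le. intros l Hl.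
  rewrite <- pow2_abs. apply pow_incr. split; [apply Rabs_pos|].
  rewrite Hl3 by auto.
  assert (A1 : Rabs (Y j l) <= fsum k (fun m => Rabs (Y m l)))
    by (apply (fsum_elem_le k (fun m => Rabs (Y m l))); auto; intros; apply Rabs_pos).
  assert (A2 : Rabs (fsum k (fun m => lam m * Y m l)) <= fsum k (fun m => Rabs (Y m l))).
  { eapply Rle_trans; [apply Rabs_fsum|]. apply fsum_le. intros m Hm. rewrite Rabs_mult.
    assert (lam m <= 1) by (rewrite <- Hl2; apply fsum_elem_le; auto).
    specialize (Hl1 m Hm). rewrite (Rabs_right (lam m)) by lra.
    pose proof (Rabs_pos (Y m l)). nra. }
  eapply Rle_trans; [apply Rabs_triang|]. rewrite Rabs_Ropp. lra.
Qed.

(* First-order optimality, approximately: for a near-minimiser [p], the residual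
   [v - p] makes an (almost) obtuse angle with every direction [Y_j - p]. *)
Lemma near_minimizer_angle k d Y v p j s delta :
  (1 <= k)%nat -> in_hull k d Y p -> (j < k)%nat -> 0 < s <= 1 ->
  s * hull_spread k d Y <= delta ^ 2 ->
  sqnorm d (fun l => v l - p l) < dist_hull k d Y v ^ 2 + s * delta ^ 2 ->
  dot d (fun l => v l - p l) (fun l => Y j l - p l) < delta ^ 2.
Proof.
  intros Hk Hp Hj Hs Hspread Hnear.
  pose proof (dist_hull_le k d Y v _ Hk (in_hull_towards_vertex k d Y p j s Hp Hj ltac:(lra)))
    as Hle.
  pose proof (dist_hull_nonneg k d Y v Hk) as HD0.
  set (w := fun l => v l - p l) in *. set (h := fun l => Y j l - p l).
  set (D := dist_hull k d Y v) in *.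
  assert (Expand : sqnorm d (fun l => v l - (p l + s * (Y j l - p l)))
                   = sqnorm d w + (-2 * s * dot d w h + s ^ 2 * sqnorm d h)).
  { unfold sqnorm, dot. rewrite <- fsum_scal, <- (fsum_scal d (s ^ 2)), <- !fsum_plus.
    apply fsum_ext. intros. unfold w, h. ring. }
  assert (HD2 : D ^ 2 <= sqnorm d (fun l => v l - (p l + s * (Y j l - p l)))).
  { rewrite <- sqr_enorm. simpl. rewrite Rmult_1_r. apply Rmult_le_compat; lra. }
  assert (Hh : s ^ 2 * sqnorm d h <= s * delta ^ 2).
  { pose proof (hull_spread_bound k d Y p j Hp Hj). fold h in H.
    pose proof (sqnorm_nonneg d h). simpl. nra. }
  assert (2 * s * dot d w h < 2 * s * delta ^ 2) by lra.
  apply (Rmult_lt_reg_l (2 * s)); lra.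
Qed.

Lemma support_zero k d Y : support k d (fun _ => 0) Y = 0.
Proof.
  unfold support. destruct (maxs_attained (k - 1) (fun j => dot d (fun _ => 0) (Y j)))
    as [j [_ ->]].
  unfold dot. rewrite (fsum_ext d _ (fun _ => 0)) by (intros; ring). apply fsum_zero.
Qed.

Lemma support_of_residual k d Y v p rho : (1 <= k)%nat ->
  let r := enorm d (fun l => v l - p l) in 0 < r ->
  (forall j, (j < k)%nat -> dot d (fun l => v l - p l) (fun l => Y j l - p l) <= rho) ->
  sqnorm d (fun l => (v l - p l) / r) <= 1 /\
  r - rho / r <= dot d (fun l => (v l - p l) / r) v
                 - support k d (fun l => (v l - p l) / r) Y.
Proof.
  intros Hk r Hr Hangle. set (w := fun l => v l - p l) in *.
  change (fun l => (v l - p l) / r) with (fun l => w l / r).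
  assert (Hrr : r * r = sqnorm d w) by apply sqr_enorm.
  clearbody r.
  assert (Edot : forall z, dot d (fun l => w l / r) z = dot d w z / r).
  { intros z. unfold dot, Rdiv. rewrite Rmult_comm, <- fsum_scal. apply fsum_ext; intros; ring. }
  split.
  - unfold sqnorm. rewrite (fsum_ext d _ (fun l => / r ^ 2 * w l ^ 2)), fsum_scal
      by (intros; field; lra).
    fold (sqnorm d w). rewrite <- Hrr. simpl. right. field. lra.
  - unfold support. destruct (maxs_attained (k - 1) (fun j => dot d (fun l => w l / r) (Y j)))
      as [j [Hj ->]].
    specialize (Hangle j ltac:(lia)). rewrite dot_minus in Hangle.
    assert (Hproj : dot d w v - dot d w p = r * r).
    { rewrite <- dot_minus, Hrr. unfold dot, sqnorm, w. apply fsum_ext; intros; ring. }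
    rewrite !Edot. unfold Rdiv.
    apply (Rmult_le_reg_r r); [lra|].
    replace ((r - rho * / r) * r) with (r * r - rho) by (field; lra).
    replace ((dot d w v * / r - dot d w (Y j) * / r) * r) with (dot d w v - dot d w (Y j))
      by (field; lra).
    lra.
Qed.

Lemma support_upper_bound k d Y v delta : (1 <= k)%nat -> delta > 0 ->
  exists e, sqnorm d e <= 1 /\ dist_hull k d Y v <= dot d e v - support k d e Y + delta.
Proof.
  intros Hk Hdel.
  set (R0 := hull_spread k d Y + 1).
  assert (HR0 : 1 <= R0)
    by (pose proof (fsum_nonneg d (fun l => (2 * fsum k (fun m => Rabs (Y m l))) ^ 2)
          ltac:(intros; apply pow2_ge_0)); unfold R0, hull_spread; lra).
  assert (Hd2 : 0 < delta ^ 2) by (apply pow_lt; auto).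
  (* A near-minimiser [p], accurate enough for the angle estimate. *)
  set (s := Rmin 1 (delta ^ 2 / R0)).
  assert (Hs : 0 < s <= 1)
    by (split; [apply Rmin_pos; [lra|apply Rdiv_lt_0_compat; lra]|apply Rmin_l]).
  assert (HsR : s * hull_spread k d Y <= delta ^ 2).
  { pose proof (Rmin_r 1 (delta ^ 2 / R0)). fold s in H.
    apply (Rmult_le_compat_r R0) in H; [|lra]. unfold Rdiv in H.
    rewrite Rmult_assoc, Rinv_l in H by lra. unfold R0 in H. nra. }
  destruct (dist_hull_approx k d Y v (s * delta ^ 2) Hk ltac:(nra)) as [p [Hp Hnear]].
  set (r := enorm d (fun l => v l - p l)).
  assert (HDr : dist_hull k d Y v <= r) by now apply dist_hull_le.
  destruct (Rle_lt_dec r delta) as [Hsmall|Hbig].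
  - exists (fun _ => 0). rewrite support_zero. unfold sqnorm, dot. split.
    + rewrite (fsum_ext d _ (fun _ => 0)), fsum_zero by (intros; ring). lra.
    + rewrite (fsum_ext d _ (fun _ => 0)), fsum_zero by (intros; ring). lra.
  - destruct (support_of_residual k d Y v p (delta ^ 2) Hk ltac:(fold r; lra)) as [He Hbound].
    { intros j' Hj'. left. apply (near_minimizer_angle k d Y v p j' s delta); auto. }
    fold r in He, Hbound. eexists. split; [exact He|].
    assert (delta ^ 2 / r < delta).
    { apply (Rmult_lt_reg_r r); [lra|]. unfold Rdiv.
      rewrite Rmult_assoc, Rinv_l by lra. simpl. nra. }
    lra.
Qed.

(** With gain [A >= 1], leader weight [b > 0] and dwell
    time [tau], put [c = b / (1 + (A + b) tau)] and
      mu(s) = 1 - c s                          on [0, tau]   (leader pulls in),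
      mu(s) = 1 - c tau exp (- A (s - tau))    on [tau, oo)  (drift back). *)

Definition decay_rate (A b tau : R) : R := b / (1 + (A + b) * tau).

Definition mu_profile (A b tau s : R) : R :=
  Rmax (1 - decay_rate A b tau * s)
       (1 - decay_rate A b tau * tau * exp (- A * (s - tau))).

Lemma decay_rate_spec A b tau : 0 <= A -> 0 < b -> 0 < tau ->
  0 < decay_rate A b tau /\ decay_rate A b tau * (1 + (A + b) * tau) = b /\
  decay_rate A b tau * tau < 1.
Proof.
  intros HA Hb Ht. unfold decay_rate.
  assert (0 < 1 + (A + b) * tau) by nra.
  split; [now apply Rdiv_lt_0_compat|split; [field; lra|]].
  apply (Rmult_lt_reg_r (1 + (A + b) * tau)); auto.
  replace (b / (1 + (A + b) * tau) * tau * (1 + (A + b) * tau)) with (b * tau) by (field; lra).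
  nra.
Qed.

Lemma exp_le_exp x y : x <= y -> exp x <= exp y.
Proof.
  intros H. destruct (Req_dec x y) as [->|Hne]; [lra|].
  left. apply exp_increasing. lra.
Qed.

Lemma deriv_exp_decay c0 c A s0 x :
  derivable_pt_lim (fun t => c0 - c * exp (- A * (t - s0))) x (c * (A * exp (- A * (x - s0)))).
Proof.
  pose proof (derivable_pt_lim_comp _ exp x _ _ (deriv_affine 0 (- A) s0 x)
    (derivable_pt_lim_exp (0 + - A * (x - s0)))) as H.
  pose proof (derivable_pt_lim_minus _ _ x _ _ (derivable_pt_lim_const c0 x)
    (derivable_pt_lim_scal _ c x _ H)) as H'.
  unfold comp in H'. replace (0 + - A * (x - s0)) with (- A * (x - s0)) in H' by ring.
  replace (c * (A * exp (- A * (x - s0)))) with (0 - c * (exp (- A * (x - s0)) * - A)) by ring.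
  eapply derivable_pt_lim_ext; [|exact H'].
  intros t. unfold minus_fct, mult_real_fct. simpl. now rewrite Rplus_0_l.
Qed.

Section Profile.
Variables A b tau : R.
Hypotheses (HA : 0 <= A) (Hb : 0 < b) (Htau : 0 < tau).

Let c := decay_rate A b tau.

Lemma mu_profile_early s : 0 <= s <= tau -> mu_profile A b tau s = 1 - c * s.
Proof.
  intros Hs. destruct (decay_rate_spec A b tau HA Hb Htau) as [Hc _]. fold c in Hc.
  apply Rmax_left.
  assert (1 <= exp (- A * (s - tau))) by (rewrite <- exp_0; apply exp_le_exp; nra).
  assert (c * s <= c * tau) by (apply Rmult_le_compat_l; lra).
  assert (0 <= c * tau) by nra. fold c. nra.
Qed.

Lemma mu_profile_late s : tau <= s ->
  mu_profile A b tau s = 1 - c * tau * exp (- A * (s - tau)).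
Proof.
  intros Hs. destruct (decay_rate_spec A b tau HA Hb Htau) as [Hc _]. fold c in Hc.
  apply Rmax_right.
  assert (exp (- A * (s - tau)) <= 1) by (rewrite <- exp_0; apply exp_le_exp; nra).
  assert (c * tau <= c * s) by (apply Rmult_le_compat_l; lra).
  pose proof (exp_pos (- A * (s - tau))).
  assert (0 <= c * tau) by nra. fold c. nra.
Qed.

Lemma mu_profile_cont T : contI 0 T (mu_profile A b tau).
Proof.
  apply contI_max.
  - apply (contI_ext 0 T (fun s => 1 + - c * (s - 0))); [intros; unfold c; ring|].
    apply (contI_of_deriv _ _ _ (fun _ => - c)). intros. apply deriv_affine.
  - apply (contI_of_deriv _ _ _ (fun s => c * tau * (A * exp (- A * (s - tau))))).
    intros. apply deriv_exp_decay.
Qed.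

End Profile.

Lemma mu_profile_spec A b tau T : 0 < A -> 0 < b -> 0 < tau -> tau < T ->
  let mu := mu_profile A b tau in
    (forall t, 0 <= t <= T -> 0 < mu t <= 1) /\
    (forall t, 0 <= t <= T -> forall eps, eps > 0 -> exists delta, delta > 0 /\
       forall s, 0 <= s <= T -> Rabs (s - t) < delta -> Rabs (mu s - mu t) < eps) /\
    mu 0 = 1 /\
    (forall s t, 0 <= s -> s < t -> t <= tau -> mu t < mu s) /\
    (forall s t, tau <= s -> s < t -> t <= T -> mu s < mu t) /\
    mu T < 1.
Proof.
  intros HA Hb Ht HT mu. apply Rlt_le in HA as HA'.
  destruct (decay_rate_spec A b tau HA' Hb Ht) as [Hc [_ Hct]].
  set (c := decay_rate A b tau) in *.
  assert (Hct0 : 0 < c * tau) by nra.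
  assert (Early : forall s, 0 <= s <= tau -> mu s = 1 - c * s) by (apply mu_profile_early; auto).
  assert (Late : forall s, tau <= s -> mu s = 1 - c * tau * exp (- A * (s - tau)))
    by (apply mu_profile_late; auto).
  assert (Hexp : forall s, tau <= s -> 0 < exp (- A * (s - tau)) <= 1).
  { intros s Hs. split; [apply exp_pos|rewrite <- exp_0; apply exp_le_exp; nra]. }
  split; [|split; [|split; [|split; [|split]]]].
  - intros t Htt. destruct (Rle_lt_dec t tau).
    + rewrite Early by lra. assert (c * t <= c * tau) by (apply Rmult_le_compat_l; lra). nra.
    + rewrite Late by lra. specialize (Hexp t ltac:(lra)).
      assert (c * tau * exp (- A * (t - tau)) <= c * tau) by nra. nra.
  - apply mu_profile_cont; auto.
  - rewrite Early by lra. ring.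
  - intros s t Hs Hst Htt. rewrite !Early by lra.
    assert (c * s < c * t) by (apply Rmult_lt_compat_l; lra). lra.
  - intros s t Hs Hst Htt. rewrite !Late by lra.
    assert (exp (- A * (t - tau)) < exp (- A * (s - tau))) by (apply exp_increasing; nra).
    nra.
  - rewrite Late by lra. specialize (Hexp T ltac:(lra)). nra.
Qed.

Lemma dot_follower_rhs d e n k Eff Elf sigma a b w X Y t m :
  dot d e (fun l => follower_rhs n k Eff Elf sigma a b w X Y t m l) =
  fsum n (fun m' => if Eff (sigma t) m' m
                   then a m m' X Y t * (dot d e (X m') - dot d e (X m)) else 0)
  + fsum k (fun j' => if Elf (sigma t) j' m
                     then b m j' X Y t * (dot d e (Y j') - dot d e (X m)) else 0)
  + dot d e (w m t).
Proof.
  unfold dot, follower_rhs.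
  rewrite (fsum_ext d _ (fun l =>
     fsum n (fun m' => e l * (if Eff (sigma t) m' m
                              then a m m' X Y t * (X m' l - X m l) else 0))
   + fsum k (fun j' => e l * (if Elf (sigma t) j' m
                              then b m j' X Y t * (Y j' l - X m l) else 0))
   + e l * w m t l)) by (intros; rewrite !fsum_scal; ring).
  rewrite !fsum_plus, (fsum_swap d n), (fsum_swap d k).
  f_equal; f_equal; apply fsum_ext; intros o _;
    [destruct (Eff (sigma t) o m)|destruct (Elf (sigma t) o m)];
    try (rewrite <- fsum_minus, <- fsum_scal; apply fsum_ext; intros; ring);
    rewrite (fsum_ext d _ (fun _ => 0)) by (intros; ring); apply fsum_zero.
Qed.

Lemma deriv_dot d e (X : R -> vec) (V : vec) s :
  (forall l, (l < d)%nat -> derivable_pt_lim (fun r => X r l) s (V l)) ->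
  derivable_pt_lim (fun r => dot d e (X r)) s (dot d e V).
Proof.
  intros H. unfold dot. induction d as [|d IH]; simpl.
  - apply derivable_pt_lim_const.
  - apply (derivable_pt_lim_plus (fun r => fsum d (fun l => e l * X r l))
             (fun r => e d * X r d)); [apply IH; intros; apply H; lia|].
    apply (derivable_pt_lim_scal (fun r => X r d)). apply H. lia.
Qed.

Lemma contI_dot al T d e (X : R -> vec) : 0 <= al ->
  (forall l, (l < d)%nat -> cont_nonneg (fun t => X t l)) -> contI al T (fun t => dot d e (X t)).
Proof.
  intros H0 H. apply (contI_fsum al T d (fun l t => e l * X t l)).
  intros l Hl. apply contI_scal. now apply contI_of_nonneg, H.
Qed.

Definition coupling_gain (n : nat) (astar : R) : R := INR n * (Rabs astar + 1).

Lemma coupling_gain_ge1 n astar : (1 <= n)%nat -> 1 <= coupling_gain n astar.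
Proof.
  intros Hn. unfold coupling_gain. assert (1 <= INR n) by (apply (le_INR 1); lia).
  pose proof (Rabs_pos astar). nra.
Qed.

(** A trajectory of system (5) on a window [t0, T] starting with an arc (j, i)
    that lasts [tau].  [Z] bounds the inputs [z]; [E] is the exceptional set of
    times where the equations need not hold. *)

Section Trajectory.
Variables (n k d : nat) (astar bstar tau T : R)
  (Eff Elf : nat -> nat -> nat -> bool) (sigma : R -> nat)
  (a b : nat -> nat -> stack -> stack -> R -> R) (u : nat -> stack -> R -> vec)
  (w : nat -> R -> vec) (x y : R -> stack) (Z t0 : R) (i j : nat) (E : R -> Prop).
Hypotheses (Hk : (1 <= k)%nat) (Hb : 0 < bstar) (Htau : 0 < tau) (Hhor : t0 + tau <= T)
  (Ha : forall i' j' X Y t, (i' < n)%nat -> (j' < n)%nat -> 0 <= t ->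
          0 <= a i' j' X Y t <= astar)
  (Hbb : forall i' j' X Y t, (i' < n)%nat -> (j' < k)%nat -> 0 <= t -> bstar <= b i' j' X Y t)
  (Hxc : forall i' l, (i' < n)%nat -> (l < d)%nat -> cont_nonneg (fun t => x t i' l))
  (Hyc : forall j' l, (j' < k)%nat -> (l < d)%nat -> cont_nonneg (fun t => y t j' l))
  (HE : loc_finite E)
  (Hdyn : forall t, 0 < t -> ~ E t ->
         (forall j' l, (j' < k)%nat -> (l < d)%nat ->
            derivable_pt_lim (fun s => y s j' l) t (u j' (y t) t l)) /\
         (forall i' l, (i' < n)%nat -> (l < d)%nat ->
            derivable_pt_lim (fun s => x s i' l) t
              (follower_rhs n k Eff Elf sigma a b w (x t) (y t) t i' l)))
  (HZ : is_lub (fun r => exists t, 0 <= t /\ r = znorm n k d u w y t) Z)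
  (Ht0 : 0 <= t0) (Hi : (i < n)%nat) (Hj : (j < k)%nat)
  (Harc : forall t, t0 <= t -> t < t0 + tau -> Elf (sigma t) j i = true).

(* [init_dist] is the distance [|x(t0)|_{L(y(t0))}] to be contracted; [gain]
   bounds the total coupling among followers; [pull_rate] is the slope of [mu]. *)
Definition init_dist : R := dist_state n k d (y t0) (x t0).
Definition gain : R := coupling_gain n astar.
Definition pull_rate : R := decay_rate gain bstar tau.

Lemma init_dist_nonneg : 0 <= init_dist.
Proof. apply fmax_nonneg. Qed.

Lemma gain_ge1 : 1 <= gain.
Proof. apply coupling_gain_ge1. lia. Qed.

Lemma pull_rate_spec : 0 < pull_rate /\ pull_rate * (1 + (gain + bstar) * tau) = bstar /\
  pull_rate * tau < 1.
Proof. apply decay_rate_spec; auto. pose proof gain_ge1. lra. Qed.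

Lemma Z_nonneg : 0 <= Z.
Proof. eapply Rle_trans; [apply sqrt_pos|apply HZ; now exists 0; split; [lra|]]. Qed.

Lemma input_bounds t : 0 <= t ->
  (forall j', (j' < k)%nat -> enorm d (u j' (y t) t) <= Z) /\
  (forall m, (m < n)%nat -> enorm d (w m t) <= Z).
Proof.
  intros Ht. assert (Hz : znorm n k d u w y t <= Z) by (apply HZ; now exists t).
  set (U := fun j' => fsum d (fun l => u j' (y t) t l ^ 2)).
  set (W := fun m => fsum d (fun l => w m t l ^ 2)).
  assert (HU : forall j', 0 <= U j') by (intros; apply fsum_nonneg; intros; apply pow2_ge_0).
  assert (HW : forall m, 0 <= W m) by (intros; apply fsum_nonneg; intros; apply pow2_ge_0).
  pose proof (fsum_nonneg k U ltac:(auto)). pose proof (fsum_nonneg n W ltac:(auto)).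
  split; [intros j' Hj'|intros m Hm]; eapply Rle_trans; try apply Hz; apply sqrt_le_1_alt.
  - pose proof (fsum_elem_le k U j' ltac:(auto) Hj'). unfold U, W in *. lra.
  - pose proof (fsum_elem_le n W m ltac:(auto) Hm). unfold U, W in *. lra.
Qed.

Lemma leader_projection_growth e eps j' t :
  sqnorm d e <= 1 -> eps > 0 -> (j' < k)%nat -> t0 <= t <= T ->
  dot d e (y t j') < dot d e (y t0 j') + (Z + eps) * (t - t0) + eps.
Proof.
  intros He Heps Hj' Ht.
  apply (slope_bound (fun s => dot d e (y s j')) (fun s => dot d e (u j' (y s) s)) E t0 T);
    auto.
  - apply contI_dot; auto.
  - intros s Hs NE. split.
    + apply (deriv_dot d e (fun r => y r j')). intros l Hl.
      apply (proj1 (Hdyn s ltac:(lra) NE)); auto.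
    + eapply Rle_trans; [now apply dot_le_enorm|]. apply (input_bounds s ltac:(lra)); auto.
Qed.

Section Direction.
Variables (e : vec) (eps : R).
Hypotheses (He : sqnorm d e <= 1) (Heps : eps > 0).

Definition tolerance : R := eps / (2 * (gain + bstar)).

Definition envelope (t : R) : R := (support k d e (y t0) + eps) + (Z + eps) * (t - t0).
Definition excess (m : nat) (t : R) : R := dot d e (x t m) - envelope t.
Definition excess_rate (m : nat) (t : R) : R :=
  dot d e (fun l => follower_rhs n k Eff Elf sigma a b w (x t) (y t) t m l) - (Z + eps).

Lemma tolerance_spec :
  0 < tolerance /\ tolerance <= eps / 2 /\ (gain + bstar) * tolerance = eps / 2.
Proof.
  pose proof gain_ge1. unfold tolerance.
  split; [apply Rdiv_lt_0_compat; lra|].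
  split; [|field; lra].
  apply Rmult_le_reg_l with (2 * (gain + bstar)); [lra|].
  replace (2 * (gain + bstar) * (eps / (2 * (gain + bstar)))) with eps by (field; lra). nra.
Qed.

Lemma leaders_below_envelope s j' : t0 <= s <= T -> (j' < k)%nat ->
  dot d e (y s j') < envelope s.
Proof.
  intros Hs Hj'. pose proof (leader_projection_growth e eps j' s He Heps Hj' Hs).
  assert (dot d e (y t0 j') <= support k d e (y t0))
    by (apply (maxs_ge (k - 1) (fun j0 => dot d e (y t0 j0))); lia).
  unfold envelope. lra.
Qed.

Lemma support_drift t : t0 <= t <= T ->
  support k d e (y t0) - (Z + eps) * (t - t0) - eps < support k d e (y t).
Proof.
  intros Ht. unfold support at 1.
  destruct (maxs_attained (k - 1) (fun j0 => dot d e (y t0 j0))) as [j0 [Hj0 ->]].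
  pose proof (leader_projection_growth (fun l => - e l) eps j0 t
                ltac:(now rewrite sqnorm_opp) Heps ltac:(lia) Ht).
  rewrite !dot_opp in H.
  assert (dot d e (y t j0) <= support k d e (y t))
    by (apply (maxs_ge (k - 1) (fun j1 => dot d e (y t j1))); lia).
  lra.
Qed.

Lemma excess_deriv m s : (m < n)%nat -> t0 < s -> ~ E s ->
  derivable_pt_lim (excess m) s (excess_rate m s).
Proof.
  intros Hm Hs NE.
  apply (derivable_pt_lim_minus (fun r => dot d e (x r m)) envelope); [|apply deriv_affine].
  apply (deriv_dot d e (fun r => x r m)). intros l Hl.
  apply (proj2 (Hdyn s ltac:(lra) NE)); auto.
Qed.

Lemma excess_cont m al T' : t0 <= al -> (m < n)%nat -> contI al T' (excess m).
Proof.
  intros Hal Hm. apply contI_minus; [apply contI_dot; auto; lra|].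
  apply (contI_of_deriv _ _ _ (fun _ => Z + eps)). intros. apply deriv_affine.
Qed.

(* Key estimate on the growth of the excess of a follower [m] that is ahead
   ([excess m >= 0]) and at most [U] behind every other follower: couplings to
   followers push it by at most [gain U]; leaders never push it up, and the arc
   (j, m), when present, pulls it down at rate [bstar * excess m]. *)
Lemma excess_rate_bound s m U : t0 < s <= T -> (m < n)%nat -> 0 <= U ->
  (forall m', (m' < n)%nat -> excess m' s - excess m s <= U) -> 0 <= excess m s ->
  excess_rate m s <= gain * U - eps /\
  (Elf (sigma s) j m = true -> excess_rate m s <= gain * U - bstar * excess m s - eps).
Proof.
  intros Hs Hm HU HqU Hq0. unfold excess_rate. rewrite dot_follower_rhs.
  set (S1 := fsum n _). set (S2 := fsum k _).
  assert (HS1 : S1 <= gain * U).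
  { unfold S1, gain, coupling_gain. rewrite Rmult_assoc. apply fsum_const_le. intros m' Hm'.
    destruct (Ha m m' (x s) (y s) s Hm Hm' ltac:(lra)) as [A1 A2].
    pose proof (Rle_abs astar).
    destruct (Eff (sigma s) m' m); [|nra].
    replace (dot d e (x s m') - dot d e (x s m)) with (excess m' s - excess m s)
      by (unfold excess; ring).
    specialize (HqU m' Hm'). nra. }
  assert (Hterm : forall j', (j' < k)%nat ->
     (if Elf (sigma s) j' m
      then b m j' (x s) (y s) s * (dot d e (y s j') - dot d e (x s m)) else 0)
     <= (if Elf (sigma s) j' m then - bstar * excess m s else 0)).
  { intros j' Hj'. destruct (Elf (sigma s) j' m); [|lra].
    pose proof (leaders_below_envelope s j' ltac:(lra) Hj').
    pose proof (Hbb m j' (x s) (y s) s Hm Hj' ltac:(lra)).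
    assert (dot d e (y s j') - dot d e (x s m) <= - excess m s) by (unfold excess; lra).
    nra. }
  assert (Hterm0 : forall j', (j' < k)%nat ->
     (if Elf (sigma s) j' m
      then b m j' (x s) (y s) s * (dot d e (y s j') - dot d e (x s m)) else 0) <= 0).
  { intros j' Hj'. specialize (Hterm j' Hj'). destruct (Elf (sigma s) j' m); nra. }
  assert (HS2 : S2 <= 0).
  { unfold S2. apply Rle_trans with (fsum k (fun _ => 0)); [now apply fsum_le|].
    rewrite fsum_zero. lra. }
  assert (HS3 : dot d e (w m s) <= Z).
  { eapply Rle_trans; [now apply dot_le_enorm|]. apply (input_bounds s ltac:(lra)); auto. }
  split; [lra|].
  intros Hjm. assert (S2 <= - bstar * excess m s); [|lra].
  unfold S2. eapply Rle_trans; [apply (fsum_nonpos_elem k _ j); auto|].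
  specialize (Hterm j Hj). now rewrite Hjm in Hterm |- *.
Qed.

Lemma followers_below t m : t0 <= t <= T -> (m < n)%nat -> excess m t < init_dist + eps.
Proof.
  intros Ht Hm. destruct tolerance_spec as [Htol [Htol2 HtolA]]. pose proof gain_ge1.
  assert (0 < init_dist + eps - excess m t); [|lra].
  apply (barrier_principle n (fun m t => init_dist + eps - excess m t)
           (fun m t => 0 - excess_rate m t)
           E t0 T tolerance); auto.
  - intros m' Hm'. apply contI_minus; [apply contI_const|apply excess_cont; auto; lra].
  - intros m' s Hm' Hs NE. apply derivable_pt_lim_minus;
      [apply derivable_pt_lim_const|apply excess_deriv; auto; lra].
  - intros m' Hm'.
    assert (dot d e (x t0 m') - support k d e (y t0) <= init_dist).
    { eapply Rle_trans; [now apply support_lower_bound|].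
      apply (fmax_ge n (fun i0 => dist_hull k d (y t0) (x t0 i0))); auto. }
    unfold excess, envelope. replace (t0 - t0) with 0 by ring. lra.
  - intros m' s Hm' Hs NE Hpos Hnear. pose proof init_dist_nonneg.
    destruct (excess_rate_bound s m' tolerance ltac:(lra) Hm' ltac:(lra)) as [Hrate _].
    + intros m'' Hm''. specialize (Hpos m'' Hm''). simpl in Hpos. lra.
    + lra.
    + assert (gain * tolerance <= eps / 2) by nra. lra.
Qed.

Lemma linear_decay t : t0 <= t <= t0 + tau ->
  excess i t < (init_dist + eps) + - (init_dist * pull_rate) * (t - t0).
Proof.
  intros Ht. destruct tolerance_spec as [Htol [Htol2 HtolA]]. pose proof gain_ge1.
  pose proof init_dist_nonneg.
  destruct pull_rate_spec as [Hc [Hc2 Hc3]].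
  set (B := fun s => (init_dist + eps) + - (init_dist * pull_rate) * (s - t0)).
  assert (0 < B t - excess i t); [|unfold B in *; lra].
  apply (barrier_principle 1 (fun _ s => B s - excess i s)
           (fun _ s => - (init_dist * pull_rate) - excess_rate i s)
           E t0 (t0 + tau) tolerance Ht0 HE Htol) with (m := O); auto.
  - intros. apply contI_minus; [|apply excess_cont; auto; lra].
    apply (contI_of_deriv _ _ _ (fun _ => - (init_dist * pull_rate))). intros. apply deriv_affine.
  - intros _ s _ Hs NE. apply derivable_pt_lim_minus; [apply deriv_affine|].
    apply excess_deriv; auto; lra.
  - intros. pose proof (followers_below t0 i ltac:(lra) Hi). unfold B. lra.
  - intros _ s _ Hs NE Hpos Hnear. specialize (Hpos O ltac:(lia)). simpl in Hpos, Hnear.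
    set (G := B s - excess i s) in *. set (sx := s - t0).
    assert (Hcs : 0 <= pull_rate * sx <= pull_rate * tau)
      by (split; [|apply Rmult_le_compat_l]; unfold sx; nra).
    assert (Hq : excess i s = init_dist * (1 - pull_rate * sx) + eps - G)
      by (unfold G, B, sx; ring).
    assert (Hq0 : 0 <= excess i s) by (rewrite Hq; nra).
    set (U := init_dist * pull_rate * sx + G).
    assert (HU : forall m', (m' < n)%nat -> excess m' s - excess i s <= U).
    { intros m' Hm'. pose proof (followers_below s m' ltac:(lra) Hm'). unfold U. lra. }
    destruct (excess_rate_bound s i U ltac:(lra) Hi ltac:(unfold U; nra) HU Hq0) as [_ Hrate].
    specialize (Hrate (Harc s ltac:(lra) ltac:(lra))).
    assert (Pull : 0 <= init_dist * (bstar - pull_rate * (1 + (gain + bstar) * sx))).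
    { apply Rmult_le_pos; auto. rewrite <- Hc2 at 1. nra. }
    assert ((gain + bstar) * G < eps / 2) by nra.
    rewrite Hq in Hrate. unfold U in Hrate. nra.
Qed.

Lemma exponential_recovery t : t0 + tau <= t <= T ->
  excess i t
    < (init_dist + eps) - init_dist * pull_rate * tau * exp (- gain * (t - (t0 + tau))).
Proof.
  intros Ht. destruct tolerance_spec as [Htol [Htol2 HtolA]]. pose proof gain_ge1.
  pose proof init_dist_nonneg.
  destruct pull_rate_spec as [Hc [_ Hc3]].
  set (X := fun s => exp (- gain * (s - (t0 + tau)))).
  set (B := fun s => (init_dist + eps) - init_dist * pull_rate * tau * X s).
  assert (0 < B t - excess i t); [|unfold B, X in *; lra].
  apply (barrier_principle 1 (fun _ s => B s - excess i s)
           (fun _ s => init_dist * pull_rate * tau * (gain * X s) - excess_rate i s)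
           E (t0 + tau) T tolerance ltac:(lra) HE Htol) with (m := O); auto.
  - intros. apply contI_minus; [|apply excess_cont; auto; lra].
    apply (contI_of_deriv _ _ _ (fun s => init_dist * pull_rate * tau * (gain * X s))).
    intros. apply deriv_exp_decay.
  - intros _ s _ Hs NE. apply derivable_pt_lim_minus; [apply deriv_exp_decay|].
    apply excess_deriv; auto; lra.
  - intros. pose proof (linear_decay (t0 + tau) ltac:(lra)). unfold B, X.
    replace (- gain * (t0 + tau - (t0 + tau))) with 0 by ring. rewrite exp_0. lra.
  - intros _ s _ Hs NE Hpos Hnear. specialize (Hpos O ltac:(lia)). simpl in Hpos, Hnear.
    set (G := B s - excess i s) in *.
    assert (HX : 0 < X s <= 1).
    { unfold X. split; [apply exp_pos|rewrite <- exp_0; apply exp_le_exp; nra]. }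
    assert (0 < pull_rate * tau) by nra.
    assert (Hcx : 0 <= pull_rate * tau * X s <= pull_rate * tau) by (split; nra).
    assert (Hq : excess i s = init_dist * (1 - pull_rate * tau * X s) + eps - G)
      by (unfold G, B; ring).
    assert (Hq0 : 0 <= excess i s) by (rewrite Hq; nra).
    set (U := init_dist * (pull_rate * tau * X s) + G).
    assert (HU : forall m', (m' < n)%nat -> excess m' s - excess i s <= U).
    { intros m' Hm'. pose proof (followers_below s m' ltac:(lra) Hm'). unfold U. lra. }
    destruct (excess_rate_bound s i U ltac:(lra) Hi ltac:(unfold U; nra) HU Hq0) as [Hrate _].
    assert (gain * G < eps / 2) by nra.
    unfold U in Hrate. nra.
Qed.

Lemma projection_bound t : t0 <= t <= T ->
  dot d e (x t i) - support k d e (y t)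
    < init_dist * mu_profile gain bstar tau (t - t0)
      + 2 * (Z + eps) * (t - t0) + 3 * eps.
Proof.
  intros Ht. pose proof gain_ge1. pose proof init_dist_nonneg.
  assert (Hq : excess i t < init_dist * mu_profile gain bstar tau (t - t0) + eps).
  { destruct (Rle_lt_dec t (t0 + tau)).
    - rewrite mu_profile_early by lra. fold pull_rate.
      pose proof (linear_decay t ltac:(lra)). lra.
    - rewrite mu_profile_late by lra. fold pull_rate.
      pose proof (exponential_recovery t ltac:(lra)).
      replace (t - t0 - tau) with (t - (t0 + tau)) by ring. lra. }
  pose proof (support_drift t Ht). unfold excess, envelope in Hq. lra.
Qed.

End Direction.
End Trajectory.

Lemma le_by_eps X Y C : C > 0 -> (forall eps, eps > 0 -> X < Y + C * eps) -> X <= Y.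
Proof.
  intros HC H. apply Rnot_lt_le. intros Hlt.
  specialize (H ((X - Y) / (2 * C)) ltac:(apply Rdiv_lt_0_compat; lra)).
  replace (C * ((X - Y) / (2 * C))) with ((X - Y) / 2) in H by (field; lra). lra.
Qed.

Theorem lemma5 (n : nat) (astar_up bstar tauD Tstar : R)
  (Hn : (2 <= n)%nat) (Hb : 0 < bstar) (HtauD : 0 < tauD) (HT : tauD < Tstar) :
  exists (mu : R -> R) (gamma1 : R),
    gamma1 > 0 /\
    (forall t, 0 <= t <= Tstar -> 0 < mu t <= 1) /\
    (forall t, 0 <= t <= Tstar -> forall eps, eps > 0 -> exists delta, delta > 0 /\
       forall s, 0 <= s <= Tstar -> Rabs (s - t) < delta -> Rabs (mu s - mu t) < eps) /\
    mu 0 = 1 /\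
    (forall s t, 0 <= s -> s < t -> t <= tauD -> mu t < mu s) /\
    (forall s t, tauD <= s -> s < t -> t <= Tstar -> mu s < mu t) /\
    mu Tstar < 1 /\
    forall (k d : nat) (astar_lo : R)
      (Np : nat) (Eff Elf : nat -> nat -> nat -> bool) (sigma : R -> nat)
      (a b : nat -> nat -> stack -> stack -> R -> R)
      (u : nat -> stack -> R -> vec) (w : nat -> R -> vec)
      (x y : R -> stack) (Z : R) (t0 : R) (i j : nat),
    (1 <= k)%nat -> (1 <= d)%nat ->
    0 < astar_lo -> astar_lo <= astar_up ->
    dwell_signal Np tauD sigma ->
    (forall i' j', (i' < n)%nat -> (j' < n)%nat -> cont_weight n k d (a i' j')) ->
    (forall i' j', (i' < n)%nat -> (j' < k)%nat -> cont_weight n k d (b i' j')) ->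
    (forall i' j' X Y t, (i' < n)%nat -> (j' < n)%nat -> 0 <= t ->
       astar_lo <= a i' j' X Y t <= astar_up) ->
    (forall i' j' X Y t, (i' < n)%nat -> (j' < k)%nat -> 0 <= t ->
       bstar <= b i' j' X Y t) ->
    (forall j' l Y t, (j' < k)%nat -> (l < d)%nat -> 0 <= t ->
       forall eps, eps > 0 -> exists delta, delta > 0 /\
         forall Y', close k d delta Y Y' -> Rabs (u j' Y' t l - u j' Y t l) < eps) ->
    (forall j' l Y, (j' < k)%nat -> (l < d)%nat -> exists E : R -> Prop,
       loc_finite E /\ forall t, 0 <= t -> ~ E t ->
         forall eps, eps > 0 -> exists delta, delta > 0 /\
           forall s, 0 <= s -> Rabs (s - t) < delta ->
             Rabs (u j' Y s l - u j' Y t l) < eps) ->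
    (forall i' l, (i' < n)%nat -> (l < d)%nat -> cont_nonneg (fun t => w i' t l)) ->
    (forall i' l, (i' < n)%nat -> (l < d)%nat -> cont_nonneg (fun t => x t i' l)) ->
    (forall j' l, (j' < k)%nat -> (l < d)%nat -> cont_nonneg (fun t => y t j' l)) ->
    (exists E : R -> Prop, loc_finite E /\
       forall t, 0 < t -> ~ E t ->
         (forall j' l, (j' < k)%nat -> (l < d)%nat ->
            derivable_pt_lim (fun s => y s j' l) t (u j' (y t) t l)) /\
         (forall i' l, (i' < n)%nat -> (l < d)%nat ->
            derivable_pt_lim (fun s => x s i' l) t
              (follower_rhs n k Eff Elf sigma a b w (x t) (y t) t i' l))) ->
    is_lub (fun r => exists t, 0 <= t /\ r = znorm n k d u w y t) Z ->
    0 <= t0 -> (i < n)%nat -> (j < k)%nat ->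
    (forall t, t0 <= t -> t < t0 + tauD -> Elf (sigma t) j i = true) ->
    forall t, t0 <= t -> t <= t0 + Tstar ->
      dist_hull k d (y t) (x t i)
        <= mu (t - t0) * dist_state n k d (y t0) (x t0) + gamma1 * Z.
Proof.
  pose proof (coupling_gain_ge1 n astar_up ltac:(lia)) as HA.
  destruct (mu_profile_spec (coupling_gain n astar_up) bstar tauD Tstar ltac:(lra) Hb HtauD HT)
    as [M1 [M2 [M3 [M4 [M5 M6]]]]].
  exists (mu_profile (coupling_gain n astar_up) bstar tauD), (2 * Tstar).
  repeat (split; [assumption || lra|]).
  intros k d astar_lo Np Eff Elf sigma a b u w x y Z t0 i j Hk _ Hlo Hlu _ _ _ Ha Hbb _ _ _
    Hxc Hyc [E [HE Hdyn]] HZ Ht0 Hi Hj Harc t Ht1 Ht2.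
  assert (Ha' : forall i' j' X Y s, (i' < n)%nat -> (j' < n)%nat -> 0 <= s ->
             0 <= a i' j' X Y s <= astar_up)
    by (intros; destruct (Ha i' j' X Y s); auto; lra).
  pose proof (Z_nonneg n k d u w y Z HZ) as HZ0.
  pose proof (fmax_nonneg n (fun m => dist_hull k d (y t0) (x t0 m))) as HD0.
  (* Pick a direction [e] realising the distance up to [eps], and bound the
     projection along it on the window [t0, t0 + Tstar]. *)
  apply (le_by_eps _ _ (2 * Tstar + 4)); [lra|]. intros eps Heps.
  destruct (support_upper_bound k d (y t) (x t i) eps Hk Heps) as [e [He Hdist]].
  pose proof (projection_bound n k d astar_up bstar tauD (t0 + Tstar) Eff Elf sigma a b u w x y
    Z t0 i j E Hk Hb HtauD ltac:(lra) Ha' Hbb Hxc Hyc HE Hdyn HZ Ht0 Hi Hj Harc e eps He Heps t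
    ltac:(lra)) as Hproj.
  unfold init_dist, gain in Hproj.
  assert ((Z + eps) * (t - t0) <= (Z + eps) * Tstar) by (apply Rmult_le_compat_l; lra).
  nra.
Qed.
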